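(* Let $X$ be a compact metric space and $G$ a group of homeomorphisms of $X$ generated (as a group) by a finite set $G_1$, and assume $G$ is uniformly equicontinuous. Let $\mathcal G(G)$ be the pseudogroup generated by $G$. Then there is no Borel probability measure on $X$ that is $(\mathcal G(G),G_1)$-weakly expansive.
   Context: $(X,d)$ compact metric space. $\mathrm{Homeo}(X)$: homeomorphisms $g:D_g\to R_g$ between open subsets of $X$, composed on natural domains $D_{h\circ g}=g^{-1}(D_h)$. The pseudogroup generated by $\Gamma\subset\mathrm{Homeo}(X)$ is the set of $g\in\mathrm{Homeo}(X)$ such that each $x\in D_g$ has a neighborhood $U_x\subset D_g$ with $g|_{U_x}=g_1^{e_1}\circ\cdots\circ g_k^{e_k}|_{U_x}$ for some $g_i\in\Gamma$, $e_i\in\{\pm1\}$. $G$ is uniformly equicontinuous if for every $\varepsilon>0$ there is $\delta>0$ such that $d(x,y)<\delta$ implies $d(g(x),g(y))<\varepsilon$ for all $g\in G$ and $x,y\in X$. With generating set $G_1$: $\mathcal G_n=\{g_1\circ\cdots\circ g_n:g_i\in G_1\}$, $\mathcal G_n^x=\{g\in\mathcal G_n:x\in D_g\}$, $\Phi_\delta(x)=\{y\in X: d(g(x),g(y))\le\delta\ \forall n\in\mathbb N,\ \forall g\in\mathcal G_n^x\cap\mathcal G_n^y\}$. A Borel probability measure $\mu$ is $(\mathcal G(G),G_1)$-weakly expansive if there is $\delta>0$ with $\mu(\Phi_\delta(x))=0$ for $\mu$-a.e. $x$. *)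

From HB Require Import structures.
From mathcomp Require Import all_boot all_order all_algebra.
From mathcomp Require Import all_classical all_reals all_analysis.
Set Implicit Arguments. Unset Strict Implicit. Unset Printing Implicit Defensive.
Import Order.TTheory GRing.Theory Num.Theory.
Local Open Scope classical_set_scope.
Local Open Scope ring_scope.

(* metric spaces with a distinguished point: measurable types in
   MathComp-Analysis are pointed, so the Borel sigma-algebra needs one *)
#[short(type="pointedMetricType")]
HB.structure Definition PointedMetric (K : numDomainType) :=
  { M of Pointed M & Metric K M }.

Section Defs.
Context {R : realType} {X : pointedMetricType R}.

Definition is_homeo (f : X -> X) : Prop :=
  continuous f /\ exists g : X -> X, [/\ cancel f g, cancel g f & continuous g].

Inductive gen_group (k : nat) (g1 : 'I_k -> X -> X) : (X -> X) -> Prop :=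
  | gg_id : gen_group g1 id
  | gg_gen i : gen_group g1 (g1 i)
  | gg_inv i h : cancel (g1 i) h -> cancel h (g1 i) -> gen_group g1 h
  | gg_comp f h : gen_group g1 f -> gen_group g1 h -> gen_group g1 (f \o h).

Definition unif_equicont (G : (X -> X) -> Prop) : Prop :=
  forall eps : R, 0 < eps -> exists2 delta : R, 0 < delta &
    forall g, G g -> forall x y : X, mdist x y < delta -> mdist (g x) (g y) < eps.

Definition calG (k : nat) (g1 : 'I_k -> X -> X) (n : nat) : set (X -> X) :=
  [set g | exists w : seq 'I_k, size w = n /\
           g = foldr (fun i acc => g1 i \o acc) id w].

(* \Phi_\delta(x); all maps are globally defined so \mathcal G_n^x = \mathcal G_n *)
Definition Phi (k : nat) (g1 : 'I_k -> X -> X) (delta : R) (x : X) : set X :=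
  [set y | forall (n : nat) (g : X -> X), calG g1 n g ->
           mdist (g x) (g y) <= delta].

Definition borelX : measurableType _ := g_sigma_algebraType (@open X).

Definition weakly_expansive (k : nat) (g1 : 'I_k -> X -> X)
  (mu : probability borelX R) : Prop :=
  exists2 delta : R, 0 < delta &
    {ae mu, forall x : borelX, mu (Phi g1 delta x) = 0%E}.

End Defs.

From HB Require Import structures.
From mathcomp Require Import all_boot all_order all_algebra.
From mathcomp Require Import all_classical all_reals all_analysis.
Import Order.TTheory GRing.Theory Num.Theory.
Local Open Scope classical_set_scope.
Local Open Scope ring_scope.

Set Implicit Arguments.
Unset Strict Implicit.
Unset Printing Implicit Defensive.

(* By uniform equicontinuity, points within a fixed distance r of a stay
   delta-close to a along every orbit segment, so the ball of radius r around a
   lies in Phi_delta(a).  If mu-almost every a had mu(Phi_delta(a)) = 0, every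
   ball of radius r/2 would meet the set of such points in a null set; covering
   the compact space X by finitely many of these balls makes X itself null,
   which is impossible for a probability measure. *)

Section negligible_finite_union.
Context d (T : ringOfSetsType d) (R : realFieldType).
Variable mu : {content set T -> \bar R}.

Lemma negligible_bigcup_seq (I : choiceType) (s : seq I) (F : I -> set T) :
  (forall i, i \in s -> mu.-negligible (F i)) ->
  mu.-negligible (\bigcup_(i in [set` s]) F i).
Proof.
move=> negF; rewrite bigcup_seq big_seq.
by elim/big_ind: _ => //; [exact: negligible_set0 | exact: negligibleU].
Qed.

End negligible_finite_union.

Lemma probability_not_negligibleT d (T : measurableType d) (R : realType)
  (P : probability T R) : ~ P.-negligible [set: T].
Proof.
move=> /(measure_negligible measurableT) P0.
by have /eqP := probability_setT P; rewrite P0 eq_sym eqe oner_eq0.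
Qed.

Section borel_negligible.
Context (T : ptopologicalType) (R : realType).
Local Notation borel := (g_sigma_algebraType (@open T)).
Variable mu : {measure set borel -> \bar R}.

Lemma closed_measurable (A : set T) : closed A -> measurable (A : set borel).
Proof.
move=> closedA; rewrite -(setCK A); apply: measurableC.
by apply: sub_sigma_algebra; rewrite openC.
Qed.

Lemma compact_locally_negligible (A : set T) : compact [set: T] ->
  (forall x : T, exists2 U, nbhs x U & mu.-negligible (U `&` A)) ->
  mu.-negligible (A : set borel).
Proof.
rewrite compact_cover => cover_compactT locA.
have /choice[U locU] :
    forall x : T, exists U, nbhs x U /\ mu.-negligible (U `&` A : set borel).
  by move=> x; have [U] := locA x; exists U.
have [D _ coverD] : finite_subset_cover setT (interior \o U) [set: T].
  apply: cover_compactT => [x _|x _]; first exact: open_interior.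
  by exists x => //; exact: (locU x).1.
apply: negligibleS (negligible_bigcup_seq (s := finmap.enum_fset D)
  (fun x _ => (locU x).2)).
move=> y Ay; have [x Dx Uxy] := coverD y I.
by exists x => //; split => //; exact: interior_subset.
Qed.

End borel_negligible.

Section ball_negligible.
Context (R : realType) (X : pseudoPMetricType R).
Variable mu : {measure set (g_sigma_algebraType (@open X)) -> \bar R}.

Lemma negligible_ball_meet (A : set X) (r : R) :
  (forall a, A a -> mu.-negligible (ball a r)) ->
  forall x, mu.-negligible (ball x (r / 2) `&` A).
Proof.
move=> negA x.
have [[a [xa Aa]] | noA] := pselect (ball x (r / 2) `&` A !=set0).
  apply: (negligibleS _ (negA a Aa)) => y [xy _].
  by rewrite (splitr r); exact: ball_triangle (ball_sym xa) xy.
apply: (negligibleS _ (negligible_set0 mu)) => y xAy.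
by apply: noA; exists y.
Qed.

End ball_negligible.

Section orbit_segments.
Context (R : realType) (X : pointedMetricType R) (k : nat) (g1 : 'I_k -> X -> X).

Lemma calG_gen_group n g : calG g1 n g -> gen_group g1 g.
Proof.
move=> [w [_ ->]]; elim: w => [|i w IH] /=; first exact: gg_id.
by apply: gg_comp => //; exact: gg_gen.
Qed.

Lemma ball_sub_Phi delta : unif_equicont (gen_group g1) -> 0 < delta ->
  exists2 r : R, 0 < r & forall a, ball a r `<=` Phi g1 delta a.
Proof.
move=> equi delta_gt0; have [r r_gt0 close] := equi delta delta_gt0.
exists r => // a y; rewrite ballEmdist /= => ay n g calGg.
by apply/ltW/close => //; exact: calG_gen_group calGg.
Qed.

Hypothesis homeo_g1 : forall i, is_homeo (g1 i).

Lemma calG_continuous n g : calG g1 n g -> continuous g.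
Proof.
move=> [w [_ ->]]; elim: w => [|i w IH] /= x; first exact: cvg_id.
exact: continuous_comp (IH x) ((homeo_g1 i).1 _).
Qed.

Lemma closed_Phi delta x : closed (Phi g1 delta x).
Proof.
move=> y cly n g calGg; rewrite leNgt; apply/negP => far.
set e := mdist (g x) (g y) - delta.
have e_gt0 : 0 < e by rewrite subr_gt0.
have nbhs_y : nbhs y (g @^-1` ball (g y) e).
  exact: calG_continuous calGg y _ (nbhsx_ballx _ _ e_gt0).
have [z [Phi_z]] := cly _ nbhs_y; rewrite /= ballEmdist /= => yz.
have := metric_triangle (g x) (g z) (g y); rewrite (metric_sym (g z)) => tri.
have : mdist (g x) (g y) < delta + e.
  by apply: le_lt_trans tri _; exact: ler_ltD (Phi_z n g calGg) yz.
by rewrite /e addrC subrK ltxx.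
Qed.

Lemma negligible_Phi (mu : {measure set (@borelX R X) -> \bar R}) delta x :
  mu (Phi g1 delta x) = 0%E -> mu.-negligible (Phi g1 delta x : set borelX).
Proof.
move=> Phi0; exists (Phi g1 delta x); split=> //.
exact: closed_measurable (closed_Phi (delta := delta) (x := x)).
Qed.

End orbit_segments.

Theorem theoremC (R : realType) (X : pointedMetricType R) (k : nat)
  (g1 : 'I_k -> X -> X) :
  compact [set: X] ->
  (forall i, is_homeo (g1 i)) ->
  unif_equicont (gen_group g1) ->
  ~ exists mu : probability (@borelX R X) R, weakly_expansive g1 mu.
Proof.
move=> compactX homeo_g1 equi [mu [delta delta_gt0 ae_null]].
have [r r_gt0 ball_Phi] := ball_sub_Phi equi delta_gt0.
pose null_Phi := [set x : borelX | mu (Phi g1 delta x) = 0%E].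
have negligible_null_Phi : mu.-negligible null_Phi.
  apply: compact_locally_negligible compactX _ => x.
  exists (ball x (r / 2)); first exact/nbhsx_ballx/divr_gt0.
  apply: negligible_ball_meet => a /(negligible_Phi homeo_g1) negPhi.
  by apply: negligibleS negPhi; exact: ball_Phi.
apply: (probability_not_negligibleT (P := mu)).
by rewrite -(setUv null_Phi); exact: negligibleU negligible_null_Phi ae_null.
Qed.
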